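(* Let $G$ be a very well-covered graph with $V(G)=\{x_1,\ldots,x_h,y_1,\ldots,y_h\}$ such that $\{x_1,\ldots,x_h\}$ is a minimal vertex cover, $\{y_1,\ldots,y_h\}$ is a maximal independent set, and $\{x_i,y_i\}\in E(G)$ for all $i$. Let $s\ge1$, let $e_1,\ldots,e_s\in E(G)$ and let $G'$ be the graph associated to $(I(G)^{s+1}:e_1\cdots e_s)$ as described in the context. Let $i,j,k$ be distinct and $t_i\in\{x_i,y_i\}$. If $\{t_i,x_j\}\in E(G')$ and $\{y_j,x_k\}\in E(G')$, then $\{t_i,x_k\}\in E(G')$ or $\{t_i,y_j\}\in E(G')$.
   Context: $I(G)=(uv\mid\{u,v\}\in E(G))$ is the edge ideal; edges are identified with the products of their endpoints. $G$ is very well-covered if it has no isolated vertices, all minimal vertex covers have the same size, and this size is $|V(G)|/2$. Even-connection: vertices $u,v$ (possibly equal) are even-connected with respect to $e_1\cdots e_s$ if there is a sequence $p_0p_1\cdots p_{2k+1}$, $k\ge1$, of vertices with $p_0=u$, $p_{2k+1}=v$, $\{p_r,p_{r+1}\}\in E(G)$ for all $0\le r\le 2k$, each $\{p_{2\ell+1},p_{2\ell+2}\}$ ($0\le\ell\le k-1$) equal to some $e_m$, and each edge appearing among the $\{p_{2\ell+1},p_{2\ell+2}\}$ at most as many times as it appears in the list $e_1,\dots,e_s$. It is known that $(I(G)^{s+1}:e_1\cdots e_s)$ is minimally generated by the monomials $uv$ with $\{u,v\}\in E(G)$ or $u,v$ even-connected with respect to $e_1\cdots e_s$. Its polarization replaces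 each generator $u^2$ by $u\,u^*$ with a new variable $u^*$; $G'$ is the graph (on $V(G)$ together with the new vertices $u^*$) whose edge ideal is this polarization. Thus for $u\ne v$ in $V(G)$, $\{u,v\}\in E(G')$ iff $\{u,v\}\in E(G)$ or $u,v$ are even-connected. *)

From mathcomp Require Import all_boot.
Set Implicit Arguments. Unset Strict Implicit. Unset Printing Implicit Defensive.

Definition simple_graph (T : finType) (e : rel T) : Prop :=
  symmetric e /\ irreflexive e.

Definition vertex_cover (T : finType) (e : rel T) (C : {set T}) : Prop :=
  forall u v, e u v -> (u \in C) || (v \in C).

Definition minimal_vertex_cover (T : finType) (e : rel T) (C : {set T}) : Prop :=
  vertex_cover e C /\ forall D : {set T}, D \proper C -> ~ vertex_cover e D.

Definition independent_set (T : finType) (e : rel T) (S : {set T}) : Prop :=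
  forall u v, u \in S -> v \in S -> ~~ e u v.

Definition maximal_independent_set (T : finType) (e : rel T) (S : {set T}) : Prop :=
  independent_set e S /\ forall S' : {set T}, S \proper S' -> ~ independent_set e S'.

Definition very_well_covered (T : finType) (e : rel T) : Prop :=
  (forall v, exists w, e v w) /\
  (forall C : {set T}, minimal_vertex_cover e C -> (#|C| * 2 = #|T|)%N).

Definition same_edge (T : eqType) (f g : T * T) : bool :=
  ((f.1 == g.1) && (f.2 == g.2)) || ((f.1 == g.2) && (f.2 == g.1)).

(* u and v (possibly equal) are even-connected w.r.t. the product of the edges
   in the list es = [e_1; ...; e_s]: there is a walk p_0 p_1 ... p_{2k+1},
   k >= 1, p_0 = u, p_{2k+1} = v, consecutive vertices adjacent, each
   {p_{2l+1}, p_{2l+2}} (0 <= l <= k-1) is one of the e_m, and each edge occurs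
   among these at most as many times as in the list es. *)
Definition even_connected (T : finType) (e : rel T) (es : seq (T * T)) (u v : T) : Prop :=
  exists (k : nat) (p : nat -> T),
    (1 <= k)%N /\ [/\ p 0%N = u, p k.*2.+1 = v,
        (forall r, (r < k.*2.+1)%N -> e (p r) (p r.+1)),
        (forall l, (l < k)%N -> has (same_edge (p l.*2.+1, p l.*2.+2)) es) &
        (forall f : T * T,
          (count (same_edge f) [seq (p l.*2.+1, p l.*2.+2) | l <- iota 0 k]
            <= count (same_edge f) es)%N)].

Definition Gprime_edge (T : finType) (e : rel T) (es : seq (T * T)) (u v : T) : Prop :=
  u <> v /\ (e u v \/ even_connected e es u v).

From mathcomp Require Import all_boot zify.
Set Implicit Arguments. Unset Strict Implicit. Unset Printing Implicit Defensive.

(* Record the walk p_0 p_1 ... p_{2k+1} of an even connection by the list of its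
   even-position edges (p_1,p_2), (p_3,p_4), ...; an edge of G is the empty list.
   Very well-coveredness makes every neighbour of x_j adjacent to every
   neighbour of y_j: otherwise two such neighbours extend to a maximal
   independent set M, whose complement is a minimal vertex cover, so M has h
   vertices and must contain x_j or y_j.
   If the walks t_i ~> x_j and y_j ~> x_k share no edge, this bridge joins them
   into a walk t_i ~> x_k. Otherwise cut the first walk at its first edge used
   by the second one and continue along the second walk, forwards to x_k or
   backwards to y_j according to the direction in which it traverses that edge;
   the retained prefix uses no edge of the second walk, so no edge is used more
   often than among e_1, ..., e_s. *)

Section EdgeMultisets.
Variable T : eqType.
Implicit Types (f g q : T * T) (A B C L : seq (T * T)).

Lemma same_edgeE f g : same_edge f g = (f == g) || (f == swap_pair g).
Proof. by case: f g => a b [c d]; rewrite /same_edge /= !xpair_eqE. Qed.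

Lemma same_edge_refl f : same_edge f f.
Proof. by rewrite same_edgeE eqxx. Qed.

Lemma same_edge_swapr f g : same_edge f (swap_pair g) = same_edge f g.
Proof. by case: g => c d; rewrite /same_edge /= orbC. Qed.

Lemma same_edge_sym : symmetric (@same_edge T).
Proof.
move=> f g; rewrite !same_edgeE [g == f]eq_sym.
by congr (_ || _); apply/eqP/eqP => ->; rewrite swap_pairK.
Qed.

Lemma same_edge_eq f g : same_edge f g -> same_edge f =1 same_edge g.
Proof.
rewrite same_edgeE => /orP[] /eqP-> r //.
by rewrite same_edge_sym same_edge_swapr same_edge_sym.
Qed.

Definition sub_edges A B := forall f, count (same_edge f) A <= count (same_edge f) B.

Definition edge_disjoint A B := ~~ has (fun q => has (same_edge q) B) A.

Definition rev_pairs L := rev (map swap_pair L).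

Lemma sub_edges_trans B A C : sub_edges A B -> sub_edges B C -> sub_edges A C.
Proof. by move=> AB BC f; apply: leq_trans (AB f) (BC f). Qed.

Lemma sub_edges_catl A B : sub_edges A (A ++ B).
Proof. by move=> f; rewrite count_cat leq_addr. Qed.

Lemma sub_edges_catr A B : sub_edges B (A ++ B).
Proof. by move=> f; rewrite count_cat leq_addl. Qed.

Lemma sub_edges_rev_pairs L : sub_edges (rev_pairs L) L.
Proof.
move=> f; rewrite count_rev count_map.
by rewrite (eq_count (a2 := same_edge f)) // => q; rewrite /preim /= same_edge_swapr.
Qed.

Lemma rev_pairs_cat A q B :
  rev_pairs (A ++ q :: B) = rev_pairs B ++ swap_pair q :: rev_pairs A.
Proof. by rewrite /rev_pairs map_cat rev_cat /= rev_cons cat_rcons. Qed.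

Lemma sub_edges_has L B q : sub_edges L B -> q \in L -> has (same_edge q) B.
Proof.
move=> LB qL; rewrite has_count (leq_trans _ (LB q)) // -has_count.
by apply/hasP; exists q; rewrite ?same_edge_refl.
Qed.

Lemma edge_disjointW A B B' :
  sub_edges B' B -> edge_disjoint A B -> edge_disjoint A B'.
Proof.
move=> B'B /hasPn disj; apply/hasPn => q /disj.
by rewrite !has_count -!leqNgt => /(leq_trans (B'B q)).
Qed.

Lemma sub_edges_cat A B C :
  edge_disjoint A B -> sub_edges A C -> sub_edges B C -> sub_edges (A ++ B) C.
Proof.
move=> /hasPn disj AC BC f; rewrite count_cat.
have [/hasP[q qA fq] | ] := boolP (has (same_edge f) A).
  move: (disj q qA); rewrite -(eq_has (same_edge_eq fq)) has_count lt0n negbK.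
  by move=> /eqP->; rewrite addn0 AC.
by rewrite has_count lt0n negbK => /eqP->; exact: BC.
Qed.

End EdgeMultisets.

Section VeryWellCovered.
Variables (T : finType) (e : rel T).
Implicit Types (A M : {set T}) (u v w z : T).

Definition stable A := [forall u in A, forall v in A, ~~ e u v].

Lemma stableP A : reflect (independent_set e A) (stable A).
Proof.
apply: (iffP forall_inP) => [st u v uA vA | ind u uA].
  by move/forall_inP: (st u uA); apply.
by apply/forall_inP => v; apply: ind.
Qed.

Lemma maxset_stable_min_cover M :
  irreflexive e -> maxset stable M -> minimal_vertex_cover e (~: M).
Proof.
move=> e_irr maxM; have /stableP stM := maxsetp maxM.
split=> [u v uv | D /properP[DM [v vM vD]] Dcover].
  by rewrite !inE -negb_and; apply: contraL uv => /andP[]; apply: stM.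
have nbr_v u : u \in M -> ~~ e v u && ~~ e u v.
  move=> uM; apply/andP; split; apply/negP => /Dcover;
    by rewrite (negbTE vD) ?orbF => /(subsetP DM); rewrite inE uM.
have stvM : stable (v |: M).
  apply/stableP => u u'; rewrite !inE.
  case/orP=> [/eqP-> | uM] /orP[/eqP-> | u'M]; first by rewrite e_irr.
  - by case/andP: (nbr_v _ u'M).
  - by case/andP: (nbr_v _ uM).
  - exact: stM.
by move: vM; rewrite inE -(maxsetsup maxM stvM (subsetUr _ _)) setU11.
Qed.

Variables (h : nat) (x y : 'I_h -> T).
Hypothesis matched_cover : forall v, exists a, v = x a \/ v = y a.
Hypothesis matched_edge : forall a, e (x a) (y a).

Lemma card_matched_graph :
  injective x -> injective y -> (forall a b, x a <> y b) -> #|T| = h * 2.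
Proof.
move=> injx injy xy.
pose g (p : 'I_h * bool) := if p.2 then y p.1 else x p.1.
have injg : injective g.
  move=> [a []] [b []]; rewrite /g /=;
    [by move/injy-> | by move/esym/xy | by move/xy | by move/injx->].
have img_g : g @: [set: 'I_h * bool] = [set: T].
  apply/setP => v; rewrite inE; apply/imsetP.
  by have [a [->|->]] := matched_cover v; [exists (a, false) | exists (a, true)].
by rewrite -cardsT -img_g card_imset // cardsT card_prod card_ord card_bool.
Qed.

Lemma stable_meets_matched_pairs M :
  stable M -> #|M| = h -> forall a, (x a \in M) || (y a \in M).
Proof.
move=> /stableP stM cardM a.
pose ix v := odflt a [pick b | (v == x b) || (v == y b)].
have ixP v : v = x (ix v) \/ v = y (ix v).
  rewrite /ix; case: pickP => [b /orP[] /eqP | none]; [by left | by right |].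
  by have [b [vb | vb]] := matched_cover v; move: (none b); rewrite vb eqxx ?orbT.
have ix_inj : {in M &, injective ix}.
  move=> u v uM vM ix_uv; have := stM u v uM vM; have := stM v u vM uM.
  by case: (ixP u) (ixP v) => -> [] ->; rewrite -ix_uv ?matched_edge.
have : a \in ix @: M.
  suff -> : ix @: M = setT by rewrite inE.
  by apply/eqP; rewrite eqEcard subsetT cardsT card_ord card_in_imset // cardM leqnn.
by case/imsetP=> v vM ->; case: (ixP v) => <-; rewrite vM ?orbT.
Qed.

Lemma matched_neighbours_adj :
  simple_graph e -> very_well_covered e ->
  injective x -> injective y -> (forall a b, x a <> y b) ->
  forall a w z, e w (x a) -> e (y a) z -> e w z.
Proof.
move=> [e_sym e_irr] [_ vwc] injx injy xy a w z wx yz.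
apply/negPn/negP => not_wz.
have st_wz : stable [set w; z].
  apply/stableP => u v; rewrite !inE => /orP[] /eqP-> /orP[] /eqP->;
    by rewrite ?e_irr // e_sym.
have [M maxM wzM] := maxset_exists st_wz.
have /stableP stM := maxsetp maxM.
have cardM : #|M| = h.
  have := vwc _ (maxset_stable_min_cover e_irr maxM).
  have := cardsC M; rewrite card_matched_graph //; lia.
have wM : w \in M by apply: (subsetP wzM); rewrite !inE eqxx.
have zM : z \in M by apply: (subsetP wzM); rewrite !inE eqxx orbT.
case/orP: (stable_meets_matched_pairs (maxsetp maxM) cardM a) => [xM | yM].
  by move: (stM _ _ wM xM); rewrite wx.
by move: (stM _ _ yM zM); rewrite yz.
Qed.

End VeryWellCovered.

Section EvenWalks.
Variables (T : finType) (e : rel T) (es : seq (T * T)).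
Hypothesis e_sym : symmetric e.
Hypothesis es_edges : forall f, f \in es -> e f.1 f.2.
Implicit Types (u v w z : T) (q : T * T) (A B L P Q : seq (T * T)) (p : nat -> T).

Fixpoint linked u L v : bool :=
  if L is q :: L' then e u q.1 && linked q.2 L' v else e u v.

Definition even_walk u L v := linked u L v /\ sub_edges L es.

Lemma linked_cat u A q B v :
  linked u (A ++ q :: B) v = linked u A q.1 && linked q.2 B v.
Proof. by elim: A u => [|r A IH] u //=; rewrite IH andbA. Qed.

Lemma linked_rev u L v : linked u L v -> linked v (rev_pairs L) u.
Proof.
elim: L u => [|q L IH] u /=; first by rewrite e_sym.
by move=> /andP[uq /IH Lv]; rewrite -[q :: L]cat0s rev_pairs_cat linked_cat /= Lv e_sym.
Qed.

Lemma linked_bridge u m1 m2 v A B :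
  (forall w z, e w m1 -> e m2 z -> e w z) ->
  linked u A m1 -> linked m2 B v -> linked u (A ++ B) v.
Proof.
move=> bridge; elim: A u => [|q A IH] u /=; last by case/andP=> -> /IH.
by case: B => [|r B] /= um1; [apply: bridge | case/andP=> /(bridge _ _ um1) ->].
Qed.

Lemma even_walk_rev u L v : even_walk u L v -> even_walk v (rev_pairs L) u.
Proof.
case=> uv Les; split; first exact: linked_rev.
exact: sub_edges_trans (sub_edges_rev_pairs L) Les.
Qed.

Lemma even_walk_split u A q B v :
  even_walk u (A ++ q :: B) v ->
  [/\ linked u A q.1, linked q.2 B v, sub_edges A es & sub_edges (q :: B) es].
Proof.
rewrite /even_walk linked_cat => -[/andP[uA Bv] ABes]; split=> //.
  exact: sub_edges_trans (sub_edges_catl _ _) ABes.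
exact: sub_edges_trans (sub_edges_catr _ _) ABes.
Qed.

Lemma even_walk_bridge u m1 m2 v Q P :
  (forall w z, e w m1 -> e m2 z -> e w z) -> edge_disjoint Q P ->
  even_walk u Q m1 -> even_walk m2 P v -> even_walk u (Q ++ P) v.
Proof.
move=> bridge QP [uQ Qes] [Pv Pes]; split; first exact: linked_bridge uQ Pv.
exact: sub_edges_cat.
Qed.

Lemma even_walk_shortcut u m w v Q1 q Q2 P1 P2 :
  edge_disjoint Q1 (P1 ++ q :: P2) ->
  even_walk u (Q1 ++ q :: Q2) m -> even_walk w (P1 ++ q :: P2) v ->
  even_walk u (Q1 ++ q :: P2) v.
Proof.
move=> /(edge_disjointW (sub_edges_catr _ _)) Q1P2.
move=> /even_walk_split[uQ1 _ Q1es _] /even_walk_split[_ P2v _ P2es].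
by split; [rewrite linked_cat uQ1 | exact: sub_edges_cat].
Qed.

Lemma even_walk_splice u m1 m2 v Q P :
  (forall w z, e w m1 -> e m2 z -> e w z) ->
  even_walk u Q m1 -> even_walk m2 P v ->
  exists L, even_walk u L v \/ even_walk u L m2.
Proof.
move=> bridge walkQ walkP.
have [QP | /negbNE shared] := boolP (edge_disjoint Q P).
  by exists (Q ++ P); left; apply: even_walk_bridge walkQ walkP.
case: (split_find shared) walkQ => q Q1 Q2 /hasP[q' q'P qq'] Q1P.
rewrite cat_rcons => walkQ; move: qq'; rewrite same_edgeE => /orP[] /eqP q_def.
  move: walkP Q1P; rewrite -{}q_def in q'P *; case/splitPr: q'P => P1 P2 walkP Q1P.
  by exists (Q1 ++ q :: P2); left; apply: even_walk_shortcut walkQ walkP.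
move: (even_walk_rev walkP) (edge_disjointW (sub_edges_rev_pairs P) Q1P).
case/splitPr: q'P => P1 P2; rewrite rev_pairs_cat -q_def => walkP' Q1P'.
by exists (Q1 ++ q :: rev_pairs P1); right; apply: even_walk_shortcut walkQ walkP'.
Qed.

Definition jumps p k := [seq (p l.*2.+1, p l.*2.+2) | l <- iota 0 k].

Fixpoint walk_at u L v r : T :=
  match L, r with
  | _, 0 => u
  | [::], _.+1 => v
  | q :: _, 1 => q.1
  | q :: L', r'.+2 => walk_at q.2 L' v r'
  end.

Lemma jumpsS p k : jumps p k.+1 = (p 1, p 2) :: jumps (fun r => p r.+2) k.
Proof. by rewrite /jumps /= (iotaDl 1 0) -map_comp. Qed.

Lemma linked_jumps p k :
  (forall r, r < k.*2.+1 -> e (p r) (p r.+1)) -> linked (p 0) (jumps p k) (p k.*2.+1).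
Proof.
elim: k p => [|k IH] p adj; first exact: adj.
rewrite jumpsS /= adj //=; apply: (IH (fun r => p r.+2)) => r lt_r.
by apply: adj; rewrite doubleS ltnS ltnS.
Qed.

Lemma walk_at0 u L v : walk_at u L v 0 = u.
Proof. by case: L. Qed.

Lemma walk_at_end u L v : walk_at u L v (size L).*2.+1 = v.
Proof. by elim: L u => [|q L IH] u //=; rewrite doubleS. Qed.

Lemma jumps_walk_at u L v : jumps (walk_at u L v) (size L) = L.
Proof. by elim: L u => [|q L IH] u //=; rewrite jumpsS walk_at0 IH; case: q. Qed.

Lemma walk_at_adj u L v :
  {in L, forall q, e q.1 q.2} -> linked u L v ->
  forall r, r < (size L).*2.+1 -> e (walk_at u L v r) (walk_at u L v r.+1).
Proof.
elim: L u => [|q L IH] u /= Ledges; first by move=> uv [].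
case/andP=> uq Lv [|[|r]] //=; first by rewrite walk_at0 Ledges ?mem_head.
by rewrite doubleS !ltnS; apply: (IH _ _ Lv) => q' q'L; rewrite Ledges ?inE ?q'L ?orbT.
Qed.

Lemma sub_edges_edges L : sub_edges L es -> {in L, forall q, e q.1 q.2}.
Proof.
move=> Les q /(sub_edges_has Les) /hasP[f /es_edges f_edge].
by rewrite same_edgeE => /orP[] /eqP-> //=; rewrite e_sym.
Qed.

Lemma Gprime_edge_even_walk u v :
  Gprime_edge e es u v -> exists L, even_walk u L v.
Proof.
case=> _ [uv | [k [p [_ [p0 pk adj _ counts]]]]]; first by exists [::].
by exists (jumps p k); split; [rewrite -p0 -pk; exact: linked_jumps | exact: counts].
Qed.

Lemma even_walk_Gprime_edge u L v :
  u <> v -> even_walk u L v -> Gprime_edge e es u v.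
Proof.
move=> neq_uv [uLv Les]; split=> //.
case: L => [|q L'] in uLv Les *; [by left | right; set L := q :: L' in uLv Les *].
have jumpsL := jumps_walk_at u L v.
exists (size L), (walk_at u L v); split=> //; split.
- exact: walk_at0.
- exact: walk_at_end.
- exact: walk_at_adj (sub_edges_edges Les) uLv.
- move=> l lt_l; apply: (sub_edges_has Les); rewrite -[in X in _ \in X]jumpsL.
  by apply: map_f; rewrite mem_iota.
- by rewrite -/(jumps _ _) jumpsL.
Qed.

End EvenWalks.

Theorem lemma4p2 (T : finType) (e : rel T) (h : nat) (x y : 'I_h -> T)
    (es : seq (T * T)) (i j k : 'I_h) (ti : T) :
  simple_graph e ->
  very_well_covered e ->
  injective x -> injective y ->
  (forall a b, x a <> y b) ->
  (forall v : T, exists a, v = x a \/ v = y a) ->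
  minimal_vertex_cover e [set x a | a in 'I_h] ->
  maximal_independent_set e [set y a | a in 'I_h] ->
  (forall a, e (x a) (y a)) ->
  (1 <= size es)%N ->
  (forall f, f \in es -> e f.1 f.2) ->
  i != j -> j != k -> i != k ->
  (ti = x i \/ ti = y i) ->
  Gprime_edge e es ti (x j) ->
  Gprime_edge e es (y j) (x k) ->
  Gprime_edge e es ti (x k) \/ Gprime_edge e es ti (y j).
Proof.
move=> sg vwc injx injy xy cover _ _ matched _ es_edges ij _ ik ti_i ti_xj yj_xk.
have e_sym : symmetric e by case: sg.
have bridge := matched_neighbours_adj cover matched sg vwc injx injy xy (a := j).
have [Q walkQ] := Gprime_edge_even_walk ti_xj.
have [P walkP] := Gprime_edge_even_walk yj_xk.
have ti_xk : ti <> x k.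
  by case: ti_i => ->; [move/injx/eqP; apply/negP | move/esym; apply: xy].
have ti_yj : ti <> y j.
  by case: ti_i => ->; [apply: xy | move/injy/eqP; apply/negP].
have [L [walk_xk | walk_yj]] := even_walk_splice e_sym bridge walkQ walkP.
  by left; apply: even_walk_Gprime_edge walk_xk.
by right; apply: even_walk_Gprime_edge walk_yj.
Qed.
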